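(* Let $f\in\mathcal{K}$ have radius of convergence $R>0$ and fulcrum $F$. Assume that $f$ is Gaussian and that for some even integer $n\ge4$, $$\limsup_{s\uparrow\ln R}\frac{|F^{(j)}(s)|}{F''(s)^{j/2}}<+\infty\quad\text{for every }3\le j\le n.$$ Then $$\lim_{s\uparrow\ln R}\frac{F^{(j)}(s)}{F''(s)^{j/2}}=0\quad\text{for every }3\le j<n.$$
   Context: The class $\mathcal{K}$ consists of non-constant power series $f(z)=\sum_{n\ge0}a_nz^n$ with radius of convergence $R\in(0,+\infty]$, with $a_n\ge 0$ for all $n$ and $a_0>0$. For $t\in(0,R)$, $X_t$ is the random variable with $\mathbf{P}(X_t=n)=a_nt^n/f(t)$, $n\ge0$. Write $m_f(t)=\mathbf{E}(X_t)$, $\sigma_f^2(t)=\mathbf{V}(X_t)>0$ and $\breve{X}_t=(X_t-m_f(t))/\sigma_f(t)$. $f$ is called Gaussian if $\breve{X}_t$ converges in distribution to a standard normal random variable as $t\uparrow R$. The fulcrum of $f$ is $F(s)=\ln f(e^s)$ for real $s<\ln R$ (with $\ln R=+\infty$ if $R=+\infty$); $F''(s)=\sigma_f^2(e^s)$. *)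

From Stdlib Require Import Reals Lra.
From Coquelicot Require Import Coquelicot.
Open Scope R_scope.

Definition in_class_K (a : nat -> R) : Prop :=
  (forall n, 0 <= a n) /\ 0 < a 0%nat /\ (exists n, (1 <= n)%nat /\ a n <> 0)
  /\ Rbar_lt (Finite 0) (CV_radius a).

Definition pf (a : nat -> R) (t : R) : R := PSeries a t.

(* mean and variance of X_t, P(X_t = n) = a_n t^n / f(t) *)
Definition mean_f (a : nat -> R) (t : R) : R :=
  Series (fun n => INR n * (a n * t ^ n)) / pf a t.
Definition var_f (a : nat -> R) (t : R) : R :=
  Series (fun n => (INR n - mean_f a t) ^ 2 * (a n * t ^ n)) / pf a t.
Definition sd_f (a : nat -> R) (t : R) : R := sqrt (var_f a t).

Definition cdf_breve (a : nat -> R) (t x : R) : R :=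
  Series (fun n => if Rle_dec ((INR n - mean_f a t) / sd_f a t) x
                   then a n * t ^ n else 0) / pf a t.

Definition Phi (x : R) : R :=
  RInt_gen (fun u => exp (- u ^ 2 / 2) / sqrt (2 * PI))
           (Rbar_locally m_infty) (at_point x).

Definition left_to (L : Rbar) : (R -> Prop) -> Prop :=
  match L with
  | Finite r => at_left r
  | _ => Rbar_locally L
  end.

Definition Rbar_ln (L : Rbar) : Rbar :=
  match L with
  | Finite r => Finite (ln r)
  | p_infty => p_infty
  | m_infty => m_infty
  end.

(* Gaussian: breve X_t converges in distribution to N(0,1) as t -> R^-
   (convergence of CDFs at every point, all points being continuity points
   of Phi). *)
Definition gaussian (a : nat -> R) : Prop :=
  forall x : R,
    filterlim (fun t => cdf_breve a t x) (left_to (CV_radius a)) (locally (Phi x)).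

Definition fulcrum (a : nat -> R) (s : R) : R := ln (pf a (exp s)).

Definition norm_deriv (a : nat -> R) (j : nat) (s : R) : R :=
  Derive_n (fulcrum a) j s / Rpower (Derive_n (fulcrum a) 2 s) (INR j / 2).

From Stdlib Require Import Reals Lra Lia Factorial.
From Coquelicot Require Import Coquelicot.
Open Scope R_scope.

(* Write [Y_s] for the standardized [X_t] at [t = e^s].  The [r]-th derivative of
   [s |-> e^(-c s) f(e^s)] is [sum_k (k - c)^r a_k e^((k - c) s)], so with [c] the mean, Leibniz'
   rule applied to the logarithmic derivative gives the moment-cumulant recursion
   [mu_(r+1) = sum_i C(r, i) mu_i kappa_(r+1-i)] between the moments [mu] of [Y_s] and the
   normalized cumulants [kappa_m = F^(m) / F''^(m/2)].  Bounded [kappa_3, ..., kappa_n] thus give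
   bounded [mu_1, ..., mu_n]; as [n] is even, [mu_n] controls the tails uniformly, and convergence
   in distribution upgrades to convergence of [mu_j], [j < n], to the Gaussian moments (through
   Riemann-Stieltjes sums on windows [[-L, L]]).  These satisfy Stein's identity
   [E N^(j+2) = (j+1) E N^j], so the recursion at order [j+2] forces [kappa_(j+3) -> 0], by
   induction on [j]. *)

(** * Bounds along a filter *)

Section Along.
Context (F : (R -> Prop) -> Prop) {FF : Filter F}.

Definition bounded_along (u : R -> R) : Prop := exists M, F (fun s => Rabs (u s) <= M).
Definition vanishing_along (u : R -> R) : Prop :=
  forall eps, 0 < eps -> F (fun s => Rabs (u s) <= eps).

Lemma bounded_along_ext u v : F (fun s => u s = v s) -> bounded_along u -> bounded_along v.
Proof.
  intros Huv [M HM]. exists M. generalize (filter_and (F := F) _ _ Huv HM). apply filter_imp.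
  intros s [<- H]. exact H.
Qed.

Lemma vanishing_along_ext u v : F (fun s => u s = v s) -> vanishing_along u -> vanishing_along v.
Proof.
  intros Huv H eps Heps. generalize (filter_and (F := F) _ _ Huv (H eps Heps)). apply filter_imp.
  intros s [<- H']. exact H'.
Qed.

Lemma bounded_along_const c : bounded_along (fun _ => c).
Proof. exists (Rabs c). apply filter_forall. intros; lra. Qed.

Lemma bounded_along_plus u v :
  bounded_along u -> bounded_along v -> bounded_along (fun s => u s + v s).
Proof.
  intros [M1 H1] [M2 H2]. exists (M1 + M2). generalize (filter_and (F := F) _ _ H1 H2). apply filter_imp.
  intros s [A1 A2]. eapply Rle_trans. apply Rabs_triang. lra.
Qed.

Lemma bounded_along_mult u v :
  bounded_along u -> bounded_along v -> bounded_along (fun s => u s * v s).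
Proof.
  intros [M1 H1] [M2 H2]. exists (M1 * M2). generalize (filter_and (F := F) _ _ H1 H2). apply filter_imp.
  intros s [A1 A2]. rewrite Rabs_mult. apply Rmult_le_compat; auto using Rabs_pos.
Qed.

Lemma bounded_along_sum (f : nat -> R -> R) N :
  (forall i, (i <= N)%nat -> bounded_along (f i)) ->
  bounded_along (fun s => sum_f_R0 (fun i => f i s) N).
Proof.
  induction N as [|N IH]; intros H; simpl.
  - apply H. lia.
  - apply bounded_along_plus; [apply IH; intros i Hi; apply H|apply H]; lia.
Qed.

Lemma vanishing_along_plus u v :
  vanishing_along u -> vanishing_along v -> vanishing_along (fun s => u s + v s).
Proof.
  intros H1 H2 eps Heps.
  generalize (filter_and (F := F) _ _ (H1 (eps / 2) ltac:(lra)) (H2 (eps / 2) ltac:(lra))).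
  apply filter_imp.
  intros s [A1 A2]. eapply Rle_trans. apply Rabs_triang. lra.
Qed.

Lemma vanishing_along_mult u v :
  bounded_along u -> vanishing_along v -> vanishing_along (fun s => u s * v s).
Proof.
  intros [M H1] H2 eps Heps.
  assert (HM : 0 < Rabs M + 1) by (pose proof (Rabs_pos M); lra).
  generalize (filter_and (F := F) _ _ H1 (H2 (eps / (Rabs M + 1)) ltac:(apply Rdiv_lt_0_compat; lra))).
  apply filter_imp. intros s [A1 A2]. rewrite Rabs_mult.
  apply Rle_trans with ((Rabs M + 1) * (eps / (Rabs M + 1))).
  - apply Rmult_le_compat; auto using Rabs_pos. pose proof (Rle_abs M); lra.
  - right. field. lra.
Qed.

Lemma vanishing_along_filterlim u : vanishing_along u -> filterlim u F (locally 0).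
Proof.
  intros H. apply filterlim_locally. intros eps.
  generalize (H (eps / 2) ltac:(pose proof (cond_pos eps); lra)). apply filter_imp.
  intros s Hs. change (Rabs (u s - 0) < eps). rewrite Rminus_0_r. pose proof (cond_pos eps). lra.
Qed.

Lemma filter_forall_le (P : nat -> R -> Prop) N :
  (forall i, (i <= N)%nat -> F (P i)) -> F (fun s => forall i, (i <= N)%nat -> P i s).
Proof.
  induction N as [|N IH]; intros H.
  - generalize (H 0%nat (le_n 0)). apply filter_imp. intros s Hs i Hi.
    replace i with 0%nat by lia. exact Hs.
  - generalize (filter_and (F := F) _ _ (IH (fun i Hi => H i ltac:(lia))) (H (S N) (le_n _))).
    apply filter_imp. intros s [A1 A2] i Hi.
    destruct (Nat.eq_dec i (S N)) as [->|]; [exact A2|apply A1; lia].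
Qed.

End Along.

(** * The standard Gaussian density *)

Definition phi (u : R) : R := exp (- u ^ 2 / 2) / sqrt (2 * PI).

Lemma exp_le_compat x y : x <= y -> exp x <= exp y.
Proof. intros [H| ->]; [left; apply exp_increasing|]; lra. Qed.

Lemma sqrt_2PI_ge_1 : 1 <= sqrt (2 * PI).
Proof. rewrite <- sqrt_1. apply sqrt_le_1_alt. pose proof PI2_1. lra. Qed.

Lemma phi_pos u : 0 < phi u.
Proof. apply Rdiv_lt_0_compat. apply exp_pos. pose proof sqrt_2PI_ge_1. lra. Qed.

Lemma phi_le_exp u : phi u <= exp (- u ^ 2 / 2).
Proof.
  pose proof sqrt_2PI_ge_1. pose proof (exp_pos (- u ^ 2 / 2)).
  unfold phi, Rdiv. rewrite <- (Rmult_1_r (exp _)) at 2.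
  apply Rmult_le_compat_l; [lra|].
  rewrite <- Rinv_1. apply Rinv_le_contravar; lra.
Qed.

Lemma phi_le_1 u : phi u <= 1.
Proof.
  eapply Rle_trans. apply phi_le_exp. rewrite <- exp_0.
  apply exp_le_compat. pose proof (pow2_ge_0 u). lra.
Qed.

Lemma phi_le_exp_lin u : phi u <= exp (u + /2).
Proof.
  eapply Rle_trans. apply phi_le_exp. apply exp_le_compat.
  pose proof (pow2_ge_0 (u + 1)). simpl in *. nra.
Qed.

Lemma phi_opp u : phi (- u) = phi u.
Proof. unfold phi. do 3 f_equal. ring. Qed.

Lemma continuous_pow_phi m u : continuous (fun t => t ^ m * phi t) u.
Proof. apply (ex_derive_continuous (V := R_NormedModule)). unfold phi. auto_derive. auto. Qed.

Lemma ex_RInt_pow_phi m a b : ex_RInt (fun t => t ^ m * phi t) a b.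
Proof. apply (ex_RInt_continuous (V := R_CompleteNormedModule)). intros; apply continuous_pow_phi. Qed.

Lemma ex_RInt_phi a b : ex_RInt phi a b.
Proof.
  apply (ex_RInt_ext (fun t => t ^ 0 * phi t)). intros; simpl; ring. apply ex_RInt_pow_phi.
Qed.

Lemma RInt_phi_bounds u v : u <= v -> 0 <= RInt phi u v <= exp (v + /2).
Proof.
  intros Huv.
  assert (He : is_RInt (fun t => exp (t + /2)) u v (exp (v + /2) - exp (u + /2))).
  { apply (is_RInt_derive (fun t => exp (t + /2))).
    - intros x _. auto_derive; auto. ring.
    - intros x _. apply (ex_derive_continuous (V := R_NormedModule)). auto_derive. auto. }
  split.
  - apply RInt_ge_0; auto. apply ex_RInt_phi. intros; left; apply phi_pos.
  - apply Rle_trans with (exp (v + /2) - exp (u + /2)).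
    + rewrite <- (is_RInt_unique _ _ _ _ He). apply RInt_le; auto.
      apply ex_RInt_phi. eexists; eauto. intros; apply phi_le_exp_lin.
    + pose proof (exp_pos (u + /2)); lra.
Qed.

(* Cauchy criterion at [-oo]: the mass of [phi] on [[u, v]] is at most [exp (v + 1/2)]. *)
Lemma is_RInt_gen_phi x : exists l, is_RInt_gen phi (Rbar_locally m_infty) (at_point x) l.
Proof.
  assert (Hcauchy : exists l, filterlim (fun y => RInt phi y x) (Rbar_locally m_infty) (locally l)).
  { apply (filterlim_locally_cauchy (U := R_CompleteSpace)). intros eps.
    exists (fun y => y < ln eps - /2). split; [exists (ln eps - /2); auto|].
    intros u v Hu Hv. change (Rabs (RInt phi v x - RInt phi u x) < eps).
    rewrite <- (RInt_Chasles phi v u x) by apply ex_RInt_phi.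
    change (Rabs (RInt phi v u + RInt phi u x - RInt phi u x) < eps).
    unfold Rminus. rewrite Rplus_assoc, Rplus_opp_r, Rplus_0_r.
    rewrite <- (exp_ln eps) by apply cond_pos.
    destruct (Rle_dec v u) as [Hvu|Hvu].
    - destruct (RInt_phi_bounds v u Hvu). rewrite Rabs_pos_eq by lra.
      eapply Rle_lt_trans; [eassumption|]. apply exp_increasing. lra.
    - rewrite <- opp_RInt_swap by apply ex_RInt_phi.
      destruct (RInt_phi_bounds u v) as [H1 H2]; [lra|].
      unfold opp; simpl. rewrite Rabs_Ropp, Rabs_pos_eq by lra.
      eapply Rle_lt_trans; [eassumption|]. apply exp_increasing. lra. }
  destruct Hcauchy as [l Hl]. exists l.
  intros P HP. apply Filter_prod with (Q := fun y => P (RInt phi y x)) (R := fun b => b = x).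
  - apply Hl. auto.
  - reflexivity.
  - intros y b Hy Hb. subst b. exists (RInt phi y x). split; auto.
    apply (RInt_correct (V := R_CompleteNormedModule)). apply ex_RInt_phi.
Qed.

Lemma Phi_minus a b : Phi b - Phi a = RInt phi a b.
Proof.
  destruct (is_RInt_gen_phi a) as [la Ha]. destruct (is_RInt_gen_phi b) as [lb Hb].
  assert (Hab : is_RInt_gen phi (Rbar_locally m_infty) (at_point b) (plus la (RInt phi a b))).
  { apply (is_RInt_gen_Chasles phi a); auto.
    apply is_RInt_gen_at_point. apply (RInt_correct (V := R_CompleteNormedModule)). apply ex_RInt_phi. }
  unfold Phi. change (fun u => exp (- u ^ 2 / 2) / sqrt (2 * PI)) with phi.
  rewrite (is_RInt_gen_unique _ _ Hab), (is_RInt_gen_unique _ _ Ha).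
  unfold plus; simpl; ring.
Qed.

(* Stein's identity [E N^(m+2) = (m+1) E N^m] on a finite window, from [phi' t = - t phi t]. *)
Lemma RInt_pow_phi_by_parts m a b :
  RInt (fun t => t ^ (m + 2) * phi t) a b =
  INR (m + 1) * RInt (fun t => t ^ m * phi t) a b - (b ^ (m + 1) * phi b - a ^ (m + 1) * phi a).
Proof.
  assert (Hparts : is_RInt (fun t => INR (m + 1) * (t ^ m * phi t) - t ^ (m + 2) * phi t) a b
                     (b ^ (m + 1) * phi b - a ^ (m + 1) * phi a)).
  { apply (is_RInt_derive (fun t => t ^ (m + 1) * phi t)).
    - intros x _. unfold phi. auto_derive; auto.
      rewrite !pow_add. replace (Init.Nat.pred (m + 1)) with m by lia.
      pose proof sqrt_2PI_ge_1. simpl.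
      set (E := exp _). set (S := sqrt _) in *. field. lra.
    - intros x _. apply (continuous_minus (V := R_NormedModule)).
      + apply (continuous_scal_r (V := R_NormedModule)). apply continuous_pow_phi.
      + apply continuous_pow_phi. }
  assert (Hlin : is_RInt (fun t => INR (m + 1) * (t ^ m * phi t) - t ^ (m + 2) * phi t) a b
     (INR (m + 1) * RInt (fun t => t ^ m * phi t) a b - RInt (fun t => t ^ (m + 2) * phi t) a b)).
  { apply (is_RInt_minus (V := R_NormedModule)).
    - apply (is_RInt_scal (V := R_NormedModule)).
      apply (RInt_correct (V := R_CompleteNormedModule)). apply ex_RInt_pow_phi.
    - apply (RInt_correct (V := R_CompleteNormedModule)). apply ex_RInt_pow_phi. }
  pose proof (is_RInt_unique _ _ _ _ Hparts) as E1. pose proof (is_RInt_unique _ _ _ _ Hlin) as E2.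
  rewrite E1 in E2. lra.
Qed.
Lemma pow_div_fact_le_exp y k : 0 <= y -> y ^ k / INR (fact k) <= exp y.
Proof.
  intros Hy. eapply Rle_trans; [|apply exp_ge_taylor with (n := k); auto].
  assert (Hterm : forall i, 0 <= y ^ i / INR (fact i)).
  { intros i. apply Rdiv_le_0_compat. apply pow_le; auto. apply INR_fact_lt_0. }
  destruct k as [|k]; [apply Rle_refl|].
  rewrite tech5. pose proof (cond_pos_sum _ k Hterm). lra.
Qed.

(* [exp (L^2/2) >= (L^2/2)^(m+2) / (m+2)!] *)
Lemma pow_phi_le_inv m L : 1 <= L -> L ^ (m + 1) * phi L <= INR (fact (m + 2)) * 2 ^ (m + 2) / L.
Proof.
  intros HL.
  set (K := INR (fact (m + 2)) * 2 ^ (m + 2)).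
  assert (HK : 0 < K) by (apply Rmult_lt_0_compat; [apply INR_fact_lt_0|apply pow_lt; lra]).
  assert (HLp : forall k, 0 < L ^ k) by (intros; apply pow_lt; lra).
  assert (Hexp : L ^ (2 * (m + 2)) / K <= exp (L ^ 2 / 2)).
  { eapply Rle_trans; [|apply pow_div_fact_le_exp with (k := (m + 2)%nat)].
    - right. unfold K. rewrite pow_mult. unfold Rdiv. rewrite Rpow_mult_distr, pow_inv.
      field. split; apply Rgt_not_eq; [apply INR_fact_lt_0|apply pow_lt; lra].
    - pose proof (pow2_ge_0 L); lra. }
  assert (Hphi : phi L <= K / L ^ (2 * (m + 2))).
  { eapply Rle_trans. apply phi_le_exp.
    replace (- L ^ 2 / 2) with (- (L ^ 2 / 2)) by field. rewrite exp_Ropp.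
    replace (K / L ^ (2 * (m + 2))) with (/ (L ^ (2 * (m + 2)) / K))
      by (field; split; apply Rgt_not_eq; [apply HLp|lra]).
    apply Rinv_le_contravar; auto. apply Rdiv_lt_0_compat; auto. }
  assert (HL3 : L <= L ^ (m + 3)).
  { replace (m + 3)%nat with (S (m + 2)) by lia. simpl.
    pose proof (pow_R1_Rle L (m + 2) HL). nra. }
  apply Rle_trans with (L ^ (m + 1) * (K / L ^ (2 * (m + 2)))).
  { apply Rmult_le_compat_l; auto. left; auto. }
  replace (L ^ (2 * (m + 2))) with (L ^ (m + 1) * L ^ (m + 3)) by (rewrite <- pow_add; f_equal; lia).
  replace (L ^ (m + 1) * (K / (L ^ (m + 1) * L ^ (m + 3)))) with (K / L ^ (m + 3))
    by (field; split; apply Rgt_not_eq; apply HLp).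
  unfold Rdiv. apply Rmult_le_compat_l; [lra|]. apply Rinv_le_contravar; lra.
Qed.

Lemma stein_boundary_vanishing m :
  vanishing_along (Rbar_locally p_infty)
    (fun L => L ^ (m + 1) * phi L - (- L) ^ (m + 1) * phi (- L)).
Proof.
  intros eps Heps. set (K := INR (fact (m + 2)) * 2 ^ (m + 2)).
  assert (HK : 0 < K) by (apply Rmult_lt_0_compat; [apply INR_fact_lt_0|apply pow_lt; lra]).
  exists (Rmax 1 (2 * K / eps)). intros L HL.
  pose proof (Rmax_l 1 (2 * K / eps)). pose proof (Rmax_r 1 (2 * K / eps)).
  assert (H1 : 1 <= L) by lra. assert (H2 : 2 * K / eps <= L) by lra.
  rewrite phi_opp. eapply Rle_trans. apply Rabs_triang. rewrite Rabs_Ropp.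
  rewrite !Rabs_mult, <- !RPow_abs, Rabs_Ropp, !(Rabs_pos_eq (phi L)) by (left; apply phi_pos).
  rewrite Rabs_pos_eq by lra.
  pose proof (pow_phi_le_inv m L H1) as Htail. fold K in Htail.
  assert (K / L <= eps / 2).
  { apply Rmult_le_reg_r with (2 * L / eps); [apply Rdiv_lt_0_compat; lra|].
    replace (K / L * (2 * L / eps)) with (2 * K / eps) by (field; lra).
    replace (eps / 2 * (2 * L / eps)) with L by (field; lra). exact H2. }
  lra.
Qed.

(** * Discrete distributions against the Gaussian *)

Definition ind_le (c z : R) : R := if Rle_dec z c then 1 else 0.

Definition step_fun (y x : nat -> R) (N : nat) (z : R) : R :=
  sum_f_R0 (fun i => y (S i) * (ind_le (x (S i)) z - ind_le (x i) z)) N.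

Lemma step_fun_spec (y x : nat -> R) N z : (forall i, x i < x (S i)) ->
  (z <= x 0%nat -> step_fun y x N z = 0) /\ (x (S N) < z -> step_fun y x N z = 0) /\
  (x 0%nat < z <= x (S N) ->
     exists i, (i <= N)%nat /\ x i < z <= x (S i) /\ step_fun y x N z = y (S i)).
Proof.
  intros Hx.
  assert (Hmono : forall i k, (i <= k)%nat -> x i <= x k).
  { intros i k Hik. induction Hik as [|k _ IH]; [lra|]. pose proof (Hx k); lra. }
  induction N as [|N IH]; unfold step_fun in *; simpl sum_f_R0 in *; unfold ind_le in *.
  - pose proof (Hx 0%nat).
    destruct (Rle_dec z (x 1%nat)), (Rle_dec z (x 0%nat)); split; try split; intros Hz;
      try (exists 0%nat; split; [lia|split; [lra|]]); lra.
  - destruct IH as [IH1 [IH2 IH3]].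
    pose proof (Hx (S N)). pose proof (Hmono 0%nat (S N) ltac:(lia)).
    split; [|split]; intros Hz.
    + rewrite IH1 by auto.
      destruct (Rle_dec z (x (S (S N)))), (Rle_dec z (x (S N))); lra.
    + rewrite IH2 by lra.
      destruct (Rle_dec z (x (S (S N)))), (Rle_dec z (x (S N))); lra.
    + destruct (Rle_dec z (x (S N))) as [Hle|Hgt].
      * destruct (IH3 (conj (proj1 Hz) Hle)) as [i [Hi [Hzi ->]]].
        exists i. split; [lia|]. split; [exact Hzi|].
        destruct (Rle_dec z (x (S (S N)))); lra.
      * exists (S N). split; [lia|]. split; [lra|]. rewrite IH2 by lra.
        destruct (Rle_dec z (x (S (S N)))); lra.
Qed.

Lemma Rabs_pow_sub_le j M z y : Rabs z <= M -> Rabs y <= M ->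
  Rabs (z ^ j - y ^ j) <= INR j * M ^ (j - 1) * Rabs (z - y).
Proof.
  intros Hz Hy. assert (HM : 0 <= M) by (pose proof (Rabs_pos z); lra).
  induction j as [|j IH].
  - simpl. rewrite Rminus_diag, Rabs_R0. lra.
  - replace (z ^ S j - y ^ S j) with (z * (z ^ j - y ^ j) + y ^ j * (z - y)) by (simpl; ring).
    eapply Rle_trans. apply Rabs_triang. rewrite !Rabs_mult, <- RPow_abs.
    assert (Hyj : Rabs y ^ j <= M ^ j) by (apply pow_incr; split; auto; apply Rabs_pos).
    assert (Hzy : 0 <= Rabs (z - y)) by apply Rabs_pos.
    destruct j as [|j].
    + simpl in *. rewrite Rminus_diag, Rabs_R0. nra.
    + replace (S (S j) - 1)%nat with (S j) by lia. replace (S j - 1)%nat with j in IH by lia.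
      assert (HMj : 0 <= M ^ j) by (apply pow_le; auto).
      eapply Rle_trans.
      { apply Rplus_le_compat.
        - apply Rmult_le_compat; [apply Rabs_pos|apply Rabs_pos|exact Hz|exact IH].
        - apply Rmult_le_compat_r; [exact Hzy|exact Hyj]. }
      right. rewrite !S_INR. simpl. ring.
Qed.

Lemma pow_even_abs n z : Nat.Even n -> z ^ n = Rabs z ^ n.
Proof.
  intros [k ->]. rewrite !pow_mult, RPow_abs, Rabs_pos_eq; auto. apply pow2_ge_0.
Qed.

Lemma pow_le_pow_div L z j n : 0 < L -> L <= Rabs z -> (j <= n)%nat ->
  Rabs z ^ j <= Rabs z ^ n / L ^ (n - j).
Proof.
  intros HL Hz Hj. assert (HLp : 0 < L ^ (n - j)) by (apply pow_lt; auto).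
  apply Rmult_le_reg_r with (L ^ (n - j)); auto.
  unfold Rdiv. rewrite Rmult_assoc, Rinv_l, Rmult_1_r by lra.
  replace n with (j + (n - j))%nat at 2 by lia. rewrite pow_add.
  apply Rmult_le_compat_l. apply pow_le, Rabs_pos. apply pow_incr. lra.
Qed.

Definition grid_step (L : R) (N : nat) : R := 2 * L / INR (S N).
Definition grid (L : R) (N : nat) (i : nat) : R := - L + INR i * grid_step L N.

Lemma grid_step_pos L N : 0 < L -> 0 < grid_step L N.
Proof. intros. apply Rdiv_lt_0_compat; [lra|]. apply lt_0_INR; lia. Qed.

Lemma grid_S L N i : grid L N (S i) = grid L N i + grid_step L N.
Proof. unfold grid. rewrite S_INR. ring. Qed.

Lemma grid_0 L N : grid L N 0 = - L.
Proof. unfold grid. simpl. ring. Qed.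

Lemma grid_last L N : grid L N (S N) = L.
Proof. unfold grid, grid_step. field. apply not_0_INR; lia. Qed.

Lemma grid_bounds L N i : 0 < L -> (i <= S N)%nat -> - L <= grid L N i <= L.
Proof.
  intros HL Hi. pose proof (grid_step_pos L N HL) as Hh. pose proof (grid_last L N) as Hlast.
  unfold grid in *. apply le_INR in Hi. pose proof (pos_INR i).
  assert (INR i * grid_step L N <= INR (S N) * grid_step L N) by (apply Rmult_le_compat_r; lra).
  split; nra.
Qed.

(* The step function is [grid (S i) ^ j] on the [i]-th cell and [0] outside [(-L, L]], where
   [z ^ j] is dominated by the even power [z ^ n]. *)
Lemma pow_sub_step_fun_le L N j n z : 0 < L -> Nat.Even n -> (j < n)%nat ->
  Rabs (z ^ j - step_fun (fun i => grid L N i ^ j) (grid L N) N z)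
    <= INR j * L ^ (j - 1) * grid_step L N + z ^ n / L ^ (n - j).
Proof.
  intros HL Hn Hj.
  pose proof (grid_step_pos L N HL) as Hh.
  assert (Hinc : forall i, grid L N i < grid L N (S i)) by (intros; rewrite grid_S; lra).
  destruct (step_fun_spec (fun i => grid L N i ^ j) (grid L N) N z Hinc) as [P1 [P2 P3]].
  rewrite grid_0 in P1, P3. rewrite grid_last in P2, P3.
  assert (Hom : 0 <= INR j * L ^ (j - 1) * grid_step L N).
  { apply Rmult_le_pos; [apply Rmult_le_pos; [apply pos_INR|apply pow_le; lra]|lra]. }
  assert (Htail : 0 <= z ^ n / L ^ (n - j)).
  { rewrite (pow_even_abs n z Hn). apply Rdiv_le_0_compat. apply pow_le, Rabs_pos. apply pow_lt; auto. }
  assert (Hout : L <= Rabs z -> Rabs (z ^ j) <= z ^ n / L ^ (n - j)).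
  { intros. rewrite <- RPow_abs, (pow_even_abs n z Hn). apply pow_le_pow_div; auto; lia. }
  destruct (Rle_dec z (- L)) as [H1|H1].
  { rewrite P1, Rminus_0_r by auto.
    assert (L <= Rabs z) by (rewrite Rabs_left1; lra). specialize (Hout H). lra. }
  destruct (Rle_dec z L) as [H2|H2].
  - destruct (P3 (conj (Rnot_le_lt _ _ H1) H2)) as [i [Hi [[Hz1 Hz2] ->]]].
    rewrite grid_S in Hz2.
    assert (Hr : - L <= grid L N (S i) <= L) by (apply grid_bounds; auto; lia).
    assert (Hdist : Rabs (z - grid L N (S i)) <= grid_step L N) by (rewrite grid_S; apply Rabs_le; lra).
    eapply Rle_trans. apply Rabs_pow_sub_le with (M := L); apply Rabs_le; lra.
    assert (0 <= INR j * L ^ (j - 1)) by (apply Rmult_le_pos; [apply pos_INR|apply pow_le; lra]).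
    pose proof (Rmult_le_compat_l _ _ _ H Hdist). lra.
  - rewrite P2, Rminus_0_r by lra.
    assert (L <= Rabs z) by (rewrite Rabs_pos_eq; lra). specialize (Hout H). lra.
Qed.

(* [w] and [z] describe the distribution putting mass [w k / Series w] at the point [z k]. *)
Definition weights (w : nat -> R) : Prop := (forall k, 0 <= w k) /\ ex_series w /\ 0 < Series w.

Definition wcdf (w z : nat -> R) (c : R) : R := Series (fun k => ind_le c (z k) * w k) / Series w.
Definition wmoment (w z : nat -> R) (j : nat) : R := Series (fun k => z k ^ j * w k) / Series w.

Definition stieltjes_sum (G : R -> R) (L : R) (N j : nat) : R :=
  sum_f_R0 (fun i => grid L N (S i) ^ j * (G (grid L N (S i)) - G (grid L N i))) N.

Lemma ex_series_ind_le w z c : (forall k, 0 <= w k) -> ex_series w ->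
  ex_series (fun k => ind_le c (z k) * w k).
Proof.
  intros Hw Hs. apply (ex_series_le (V := R_CompleteNormedModule)) with w; auto.
  intros k. change (Rabs (ind_le c (z k) * w k) <= w k). specialize (Hw k).
  unfold ind_le. destruct (Rle_dec (z k) c); rewrite Rabs_pos_eq; lra.
Qed.

Lemma ex_series_pow_le w z n j : (forall k, 0 <= w k) -> ex_series w ->
  ex_series (fun k => z k ^ n * w k) -> Nat.Even n -> (j <= n)%nat ->
  ex_series (fun k => z k ^ j * w k).
Proof.
  intros Hw Hs Hn Hev Hj.
  apply (ex_series_le (V := R_CompleteNormedModule)) with (fun k => w k + z k ^ n * w k).
  - intros k. change (Rabs (z k ^ j * w k) <= w k + z k ^ n * w k).
    rewrite Rabs_mult, (Rabs_pos_eq (w k)), <- RPow_abs, (pow_even_abs n) by auto.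
    assert (Rabs (z k) ^ j <= 1 + Rabs (z k) ^ n).
    { destruct (Rle_dec (Rabs (z k)) 1).
      - pose proof (pow_le (Rabs (z k)) n (Rabs_pos _)).
        assert (Rabs (z k) ^ j <= 1 ^ j) by (apply pow_incr; split; auto; apply Rabs_pos).
        rewrite pow1 in *. lra.
      - pose proof (Rle_pow (Rabs (z k)) j n ltac:(lra) Hj). lra. }
    specialize (Hw k). nra.
  - apply (ex_series_plus (V := R_NormedModule)); auto.
Qed.

Lemma Series_sum_f_R0 (u : nat -> nat -> R) N : (forall i, (i <= N)%nat -> ex_series (u i)) ->
  ex_series (fun k => sum_f_R0 (fun i => u i k) N) /\
  Series (fun k => sum_f_R0 (fun i => u i k) N) = sum_f_R0 (fun i => Series (u i)) N.
Proof.
  induction N as [|N IH]; intros H; simpl.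
  - split; [apply H; lia|reflexivity].
  - destruct IH as [IHex IHeq]; [intros; apply H; lia|].
    split.
    + apply (ex_series_plus (V := R_NormedModule)); [exact IHex|apply H; lia].
    + rewrite Series_plus, IHeq; [reflexivity|exact IHex|apply H; lia].
Qed.

Lemma wexpect_step_fun w z y x N : (forall k, 0 <= w k) -> ex_series w ->
  ex_series (fun k => step_fun y x N (z k) * w k) /\
  Series (fun k => step_fun y x N (z k) * w k) / Series w =
  sum_f_R0 (fun i => y (S i) * (wcdf w z (x (S i)) - wcdf w z (x i))) N.
Proof.
  intros Hw Hs.
  set (u := fun i k => y (S i) * (ind_le (x (S i)) (z k) * w k) - y (S i) * (ind_le (x i) (z k) * w k)).
  assert (Hu : forall i, ex_series (u i)).
  { intros i. apply (ex_series_minus (V := R_NormedModule));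
      apply (ex_series_scal_l (V := R_NormedModule)); apply ex_series_ind_le; auto. }
  assert (Hstep : forall k, step_fun y x N (z k) * w k = sum_f_R0 (fun i => u i k) N).
  { intros k. unfold step_fun. rewrite Rmult_comm, scal_sum. apply sum_eq. intros i _. unfold u. ring. }
  destruct (Series_sum_f_R0 u N (fun i _ => Hu i)) as [Hex Heq].
  split; [eapply ex_series_ext; [intros k; symmetry; apply Hstep|exact Hex]|].
  rewrite (Series_ext _ _ Hstep), Heq. unfold Rdiv. rewrite Rmult_comm, scal_sum.
  apply sum_eq. intros i _. unfold u, wcdf.
  rewrite Series_minus, !Series_scal_l
    by (apply (ex_series_scal_l (V := R_NormedModule)); apply ex_series_ind_le; auto).
  unfold Rdiv. ring.
Qed.

Lemma wmoment_stieltjes_bound w z L N j n : weights w -> 0 < L -> Nat.Even n -> (j < n)%nat ->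
  ex_series (fun k => z k ^ n * w k) ->
  Rabs (wmoment w z j - stieltjes_sum (wcdf w z) L N j)
  <= INR j * L ^ (j - 1) * grid_step L N + wmoment w z n / L ^ (n - j).
Proof.
  intros [Hw [Hs HW]] HL Hev Hj Hn.
  set (psi := step_fun (fun i => grid L N i ^ j) (grid L N) N).
  destruct (wexpect_step_fun w z (fun i => grid L N i ^ j) (grid L N) N Hw Hs) as [Hpsi Epsi].
  fold psi in Hpsi, Epsi. unfold stieltjes_sum. rewrite <- Epsi. unfold wmoment.
  assert (Hj' : ex_series (fun k => z k ^ j * w k)) by (apply ex_series_pow_le with n; auto; lia).
  set (om := INR j * L ^ (j - 1) * grid_step L N).
  set (c := / L ^ (n - j)).
  assert (Hc : 0 < c) by (apply Rinv_0_lt_compat, pow_lt; auto).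
  set (bound := fun k => om * w k + c * (z k ^ n * w k)).
  assert (Hb : forall k, Rabs (z k ^ j * w k - psi (z k) * w k) <= bound k).
  { intros k. rewrite <- Rmult_minus_distr_r, Rabs_mult, (Rabs_pos_eq (w k)) by auto.
    pose proof (pow_sub_step_fun_le L N j n (z k) HL Hev Hj) as Hk. fold psi om in Hk.
    unfold bound, Rdiv in *. fold c in Hk. specialize (Hw k). nra. }
  assert (Hexb : ex_series bound).
  { apply (ex_series_plus (V := R_NormedModule)); apply (ex_series_scal_l (V := R_NormedModule)); auto. }
  replace (Series (fun k => z k ^ j * w k) / Series w - Series (fun k => psi (z k) * w k) / Series w)
    with (Series (fun k => z k ^ j * w k - psi (z k) * w k) / Series w)
    by (rewrite Series_minus by auto; field; lra).
  unfold Rdiv at 1. rewrite Rabs_mult, (Rabs_pos_eq (/ Series w)) by (left; apply Rinv_0_lt_compat; auto).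
  apply Rmult_le_reg_r with (Series w); auto. rewrite Rmult_assoc, Rinv_l, Rmult_1_r by lra.
  eapply Rle_trans; [apply Series_Rabs|].
  { apply (ex_series_le (V := R_CompleteNormedModule)) with bound; auto.
    intros k. change (Rabs (Rabs (z k ^ j * w k - psi (z k) * w k)) <= bound k).
    rewrite Rabs_Rabsolu. auto. }
  eapply Rle_trans; [apply Series_le with (b := bound); auto; intros k; split; auto; apply Rabs_pos|].
  unfold bound.
  rewrite Series_plus, !Series_scal_l by (apply (ex_series_scal_l (V := R_NormedModule)); auto).
  right. unfold c. field. split; [lra|]. apply Rgt_not_eq, pow_lt; lra.
Qed.

Lemma RInt_pow_phi_cell_bound j L a b : 0 < L -> - L <= a -> a <= b -> b <= L ->
  Rabs (RInt (fun t => t ^ j * phi t) a b - b ^ j * RInt phi a b)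
    <= INR j * L ^ (j - 1) * (b - a) * RInt phi a b.
Proof.
  intros HL Ha Hab Hb.
  set (om := INR j * L ^ (j - 1) * (b - a)).
  assert (Hcont : forall t, continuous (fun t => (t ^ j - b ^ j) * phi t) t).
  { intros t. apply (ex_derive_continuous (V := R_NormedModule)). unfold phi. auto_derive. auto. }
  assert (E : RInt (fun t => t ^ j * phi t) a b - b ^ j * RInt phi a b
            = RInt (fun t => (t ^ j - b ^ j) * phi t) a b).
  { assert (E1 : b ^ j * RInt phi a b = RInt (fun t => b ^ j * phi t) a b).
    { symmetry. apply (RInt_scal (V := R_CompleteNormedModule)). apply ex_RInt_phi. }
    assert (E2 : RInt (fun t => (t ^ j - b ^ j) * phi t) a b
                 = RInt (fun t => minus (t ^ j * phi t) (b ^ j * phi t)) a b).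
    { apply RInt_ext. intros. unfold minus, plus, opp; simpl. ring. }
    rewrite E1, E2, (RInt_minus (V := R_CompleteNormedModule)); [reflexivity|apply ex_RInt_pow_phi|].
    apply (ex_RInt_scal (V := R_NormedModule)). apply ex_RInt_phi. }
  rewrite E.
  assert (E3 : om * RInt phi a b = RInt (fun t => om * phi t) a b).
  { symmetry. apply (RInt_scal (V := R_CompleteNormedModule)). apply ex_RInt_phi. }
  rewrite E3.
  eapply Rle_trans.
  { apply abs_RInt_le; auto. apply (ex_RInt_continuous (V := R_CompleteNormedModule)). auto. }
  apply RInt_le; auto.
  - apply (ex_RInt_continuous (V := R_CompleteNormedModule)). intros t _.
    apply (continuous_comp (fun t => (t ^ j - b ^ j) * phi t) Rabs); auto. apply continuous_Rabs.
  - apply (ex_RInt_scal (V := R_NormedModule)). apply ex_RInt_phi.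
  - intros t Ht. rewrite Rabs_mult, (Rabs_pos_eq (phi t)) by (left; apply phi_pos).
    apply Rmult_le_compat_r; [left; apply phi_pos|].
    eapply Rle_trans; [apply Rabs_pow_sub_le with (M := L); apply Rabs_le; lra|].
    unfold om. apply Rmult_le_compat_l.
    + apply Rmult_le_pos; [apply pos_INR|apply pow_le; lra].
    + rewrite Rabs_left1; lra.
Qed.

Lemma RInt_phi_le L : 0 < L -> 0 <= RInt phi (- L) L <= 2 * L.
Proof.
  intros HL. destruct (RInt_phi_bounds (- L) L ltac:(lra)) as [H0 _]. split; auto.
  assert (Habs : Rabs (RInt phi (- L) L) <= (L - - L) * 1).
  { apply abs_RInt_le_const; [lra|apply ex_RInt_phi|].
    intros t _. rewrite Rabs_pos_eq by (left; apply phi_pos). apply phi_le_1. }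
  rewrite Rabs_pos_eq in Habs by auto. lra.
Qed.

Lemma RInt_pow_phi_stieltjes_bound L N j : 0 < L ->
  Rabs (RInt (fun t => t ^ j * phi t) (- L) L - stieltjes_sum Phi L N j)
  <= INR j * L ^ (j - 1) * grid_step L N * (2 * L).
Proof.
  intros HL. pose proof (grid_step_pos L N HL) as Hh.
  set (om := INR j * L ^ (j - 1) * grid_step L N).
  assert (Hom : 0 <= om)
    by (apply Rmult_le_pos; [apply Rmult_le_pos; [apply pos_INR|apply pow_le; lra]|lra]).
  assert (Hcell : forall i, (i <= N)%nat ->
    Rabs (RInt (fun t => t ^ j * phi t) (grid L N i) (grid L N (S i))
          - grid L N (S i) ^ j * (Phi (grid L N (S i)) - Phi (grid L N i)))
    <= om * RInt phi (grid L N i) (grid L N (S i))).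
  { intros i Hi. rewrite Phi_minus.
    pose proof (grid_bounds L N i HL ltac:(lia)). pose proof (grid_bounds L N (S i) HL ltac:(lia)).
    pose proof (grid_S L N i).
    replace om with (INR j * L ^ (j - 1) * (grid L N (S i) - grid L N i)) by (unfold om; f_equal; lra).
    apply RInt_pow_phi_cell_bound; lra. }
  assert (Hpartial : forall M, (M <= N)%nat ->
    Rabs (RInt (fun t => t ^ j * phi t) (grid L N 0) (grid L N (S M))
        - sum_f_R0 (fun i => grid L N (S i) ^ j * (Phi (grid L N (S i)) - Phi (grid L N i))) M)
    <= om * RInt phi (grid L N 0) (grid L N (S M))).
  { induction M as [|M IH]; intros HM; [apply Hcell; lia|].
    rewrite tech5.
    rewrite <- (RInt_Chasles (fun t => t ^ j * phi t) _ (grid L N (S M))) by apply ex_RInt_pow_phi.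
    rewrite <- (RInt_Chasles phi _ (grid L N (S M))) by apply ex_RInt_phi.
    change plus with Rplus. rewrite Rmult_plus_distr_l.
    eapply Rle_trans; [|apply Rplus_le_compat; [apply IH; lia|apply Hcell; lia]].
    eapply Rle_trans; [|apply Rabs_triang]. right. f_equal. ring. }
  specialize (Hpartial N (le_n N)). rewrite grid_0, grid_last in Hpartial.
  destruct (RInt_phi_le L HL). unfold stieltjes_sum.
  eapply Rle_trans; [exact Hpartial|]. apply Rmult_le_compat_l; lra.
Qed.

Lemma stieltjes_sum_sub_le (G1 G2 : R -> R) L N j delta : 0 < L ->
  (forall i, (i <= S N)%nat -> Rabs (G1 (grid L N i) - G2 (grid L N i)) <= delta) ->
  Rabs (stieltjes_sum G1 L N j - stieltjes_sum G2 L N j) <= INR (S N) * (L ^ j * (2 * delta)).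
Proof.
  intros HL Hclose. unfold stieltjes_sum. rewrite <- minus_sum.
  eapply Rle_trans; [apply sum_f_R0_triangle|].
  rewrite (Rmult_comm (INR (S N))), <- sum_cte. apply sum_Rle. intros i Hi.
  rewrite <- Rmult_minus_distr_l, Rabs_mult, <- RPow_abs.
  apply Rmult_le_compat; try apply Rabs_pos; [apply pow_le, Rabs_pos| |].
  - apply pow_incr. split; [apply Rabs_pos|]. apply Rabs_le, grid_bounds; auto; lia.
  - replace (G1 (grid L N (S i)) - G1 (grid L N i) - (G2 (grid L N (S i)) - G2 (grid L N i)))
      with ((G1 (grid L N (S i)) - G2 (grid L N (S i))) - (G1 (grid L N i) - G2 (grid L N i))) by ring.
    eapply Rle_trans; [apply Rabs_triang|]. rewrite Rabs_Ropp.
    pose proof (Hclose (S i) ltac:(lia)). pose proof (Hclose i ltac:(lia)). lra.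
Qed.

Lemma exists_INR_ge X : exists N : nat, X <= INR N.
Proof.
  destruct (Rle_dec 0 X) as [H|H].
  - destruct (nfloor_ex X H) as [n Hn]. exists (S n). rewrite S_INR. lra.
  - exists 0%nat. simpl. lra.
Qed.

Lemma wmoment_window_bound w z L N j n delta :
  weights w -> 0 < L -> Nat.Even n -> (j < n)%nat -> ex_series (fun k => z k ^ n * w k) ->
  (forall i, (i <= S N)%nat -> Rabs (wcdf w z (grid L N i) - Phi (grid L N i)) <= delta) ->
  Rabs (wmoment w z j - RInt (fun t => t ^ j * phi t) (- L) L)
  <= Rabs (wmoment w z n) / L ^ (n - j) + INR j * L ^ (j - 1) * grid_step L N * (1 + 2 * L)
     + INR (S N) * (L ^ j * (2 * delta)).
Proof.
  intros Hw HL Hev Hj Hn Hclose.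
  pose proof (wmoment_stieltjes_bound w z L N j n Hw HL Hev Hj Hn) as Hmom.
  pose proof (RInt_pow_phi_stieltjes_bound L N j HL) as Hgauss.
  pose proof (stieltjes_sum_sub_le _ _ L N j delta HL Hclose) as Hcdf.
  assert (wmoment w z n / L ^ (n - j) <= Rabs (wmoment w z n) / L ^ (n - j)).
  { unfold Rdiv. apply Rmult_le_compat_r; [left; apply Rinv_0_lt_compat, pow_lt; lra|apply Rle_abs]. }
  set (I := RInt (fun t => t ^ j * phi t) (- L) L) in *.
  set (Sc := stieltjes_sum (wcdf w z) L N j) in *.
  set (Sp := stieltjes_sum Phi L N j) in *.
  replace (wmoment w z j - I) with ((wmoment w z j - Sc) + (Sc - Sp) - (I - Sp)) by ring.
  eapply Rle_trans; [apply Rabs_triang|]. rewrite Rabs_Ropp.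
  eapply Rle_trans; [apply Rplus_le_compat_r, Rabs_triang|]. lra.
Qed.

Lemma grid_step_small j L eps : 0 < L -> 0 < eps ->
  exists N, INR j * L ^ (j - 1) * grid_step L N * (1 + 2 * L) <= eps.
Proof.
  intros HL Heps. set (A := INR j * L ^ (j - 1) * 2 * L * (1 + 2 * L)).
  assert (HA : 0 <= A).
  { pose proof (pos_INR j). pose proof (pow_le L (j - 1) ltac:(lra)).
    unfold A. repeat apply Rmult_le_pos; lra. }
  destruct (exists_INR_ge (A / eps)) as [N HN]. exists N.
  pose proof (pos_INR N).
  replace (INR j * L ^ (j - 1) * grid_step L N * (1 + 2 * L)) with (A / (INR N + 1))
    by (unfold A, grid_step; rewrite S_INR; field; lra).
  apply Rmult_le_reg_r with ((INR N + 1) / eps); [apply Rdiv_lt_0_compat; lra|].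
  replace (A / (INR N + 1) * ((INR N + 1) / eps)) with (A / eps) by (field; lra).
  replace (eps * ((INR N + 1) / eps)) with (INR N + 1) by (field; lra). lra.
Qed.

Lemma wmoment_gauss_window (F : (R -> Prop) -> Prop) {FF : Filter F} (w z : R -> nat -> R)
    n j L eps : Nat.Even n -> (j < n)%nat -> 0 < L -> 0 < eps ->
  F (fun s => weights (w s) /\ ex_series (fun k => z s k ^ n * w s k)) ->
  (forall x, filterlim (fun s => wcdf (w s) (z s) x) F (locally (Phi x))) ->
  F (fun s => Rabs (wmoment (w s) (z s) j - RInt (fun t => t ^ j * phi t) (- L) L)
               <= Rabs (wmoment (w s) (z s) n) / L ^ (n - j) + eps).
Proof.
  intros Hev Hj HL Heps Hw Hcdf.
  destruct (grid_step_small j L (eps / 2) HL ltac:(lra)) as [N HN].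
  set (delta := eps / (4 * INR (S N) * (L ^ j + 1))).
  assert (HLj : 0 <= L ^ j) by (apply pow_le; lra).
  pose proof (pos_INR N).
  assert (Hdelta : 0 < delta).
  { apply Rdiv_lt_0_compat; [lra|]. rewrite S_INR. apply Rmult_lt_0_compat; lra. }
  assert (Hsum : INR (S N) * (L ^ j * (2 * delta)) <= eps / 2).
  { replace (INR (S N) * (L ^ j * (2 * delta))) with (eps / 2 * (L ^ j / (L ^ j + 1)))
      by (unfold delta; rewrite S_INR; field; lra).
    rewrite <- (Rmult_1_r (eps / 2)) at 2. apply Rmult_le_compat_l; [lra|].
    apply Rmult_le_reg_r with (L ^ j + 1); [lra|].
    unfold Rdiv. rewrite Rmult_assoc, Rinv_l by lra. lra. }
  assert (Hgrid : F (fun s => forall i, (i <= S N)%nat ->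
              Rabs (wcdf (w s) (z s) (grid L N i) - Phi (grid L N i)) <= delta)).
  { apply (filter_forall_le F
      (fun i s => Rabs (wcdf (w s) (z s) (grid L N i) - Phi (grid L N i)) <= delta)).
    intros i _.
    generalize (proj1 (filterlim_locally _ _) (Hcdf (grid L N i)) (mkposreal delta Hdelta)).
    apply filter_imp. intros s Hs. left. exact Hs. }
  generalize (filter_and _ _ Hw Hgrid). apply filter_imp. intros s [[Hws Hn] Hs].
  pose proof (wmoment_window_bound (w s) (z s) L N j n delta Hws HL Hev Hj Hn Hs). lra.
Qed.

(** * Moments and cumulants *)

Lemma binomial_C_S_diag n : Binomial.C (S n) n = INR (S n).
Proof.
  rewrite pascal_step1 by lia. replace (S n - n)%nat with 1%nat by lia.
  rewrite (pascal_step3 (S n) 0) by lia. rewrite C_n_0, Nat.sub_0_r. simpl (INR 1). field.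
Qed.

Lemma vanishing_along_sum_tail F {FF : Filter F} (f : nat -> R -> R) N :
  (forall i, (1 <= i <= N)%nat -> vanishing_along F (f i)) ->
  vanishing_along F (fun s => sum_f_R0 (fun i => f i s) N - f 0%nat s).
Proof.
  induction N as [|N IH]; intros H.
  - intros eps Heps. apply filter_forall. intros s. simpl. rewrite Rminus_diag, Rabs_R0. lra.
  - apply (vanishing_along_ext F (fun s => (sum_f_R0 (fun i => f i s) N - f 0%nat s) + f (S N) s)).
    + apply filter_forall. intros s. rewrite tech5. ring.
    + apply (vanishing_along_plus F); [apply IH; intros i Hi|]; apply H; lia.
Qed.

Definition gauss_window_approx (F : (R -> Prop) -> Prop) (mu : nat -> R -> R) (n : nat) : Prop :=
  forall j L eps, (j < n)%nat -> 0 < L -> 0 < eps ->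
    F (fun s => Rabs (mu j s - RInt (fun t => t ^ j * phi t) (- L) L)
                <= Rabs (mu n s) / L ^ (n - j) + eps).

Lemma Rdiv_pow_le_Rdiv x L k : 0 <= x -> 1 <= L -> (1 <= k)%nat -> x / L ^ k <= x / L.
Proof.
  intros Hx HL Hk. unfold Rdiv. apply Rmult_le_compat_l; auto.
  apply Rinv_le_contravar; [lra|]. rewrite <- (pow_1 L) at 1. apply Rle_pow; auto.
Qed.

Lemma stein_defect_le m L x2 x0 d2 d0 :
  Rabs (x2 - RInt (fun t => t ^ (m + 2) * phi t) (- L) L) <= d2 ->
  Rabs (x0 - RInt (fun t => t ^ m * phi t) (- L) L) <= d0 ->
  Rabs (x2 - INR (m + 1) * x0)
  <= d2 + INR (m + 1) * d0 + Rabs (L ^ (m + 1) * phi L - (- L) ^ (m + 1) * phi (- L)).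
Proof.
  intros H2 H0. pose proof (RInt_pow_phi_by_parts m (- L) L) as Hstein.
  set (I2 := RInt (fun t => t ^ (m + 2) * phi t) (- L) L) in *.
  set (I0 := RInt (fun t => t ^ m * phi t) (- L) L) in *.
  set (bdry := L ^ (m + 1) * phi L - (- L) ^ (m + 1) * phi (- L)) in *.
  replace (x2 - INR (m + 1) * x0) with ((x2 - I2) - INR (m + 1) * (x0 - I0) - bdry)
    by (rewrite Hstein; ring).
  unfold Rminus at 1. eapply Rle_trans; [apply Rabs_triang|]. rewrite Rabs_Ropp.
  apply Rplus_le_compat_r. eapply Rle_trans; [apply Rabs_triang|].
  rewrite Rabs_Ropp, Rabs_mult, (Rabs_pos_eq (INR _)) by apply pos_INR.
  apply Rplus_le_compat; [exact H2|apply Rmult_le_compat_l; [apply pos_INR|exact H0]].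
Qed.

(* The window [[-L, L]] is chosen at once large enough for the tail, the boundary term and
   the moment bound. *)
Lemma stein_moments_vanishing F {FF : Filter F} (mu : nat -> R -> R) n m :
  (m + 2 < n)%nat -> bounded_along F (mu n) -> gauss_window_approx F mu n ->
  vanishing_along F (fun s => mu (m + 2)%nat s - INR (m + 1) * mu m s).
Proof.
  intros Hm [B HB] Happrox eps Heps.
  set (K := INR (m + 2)).
  assert (HK : K = INR (m + 1) + 1) by (unfold K; rewrite !plus_INR; simpl; ring).
  assert (HK1 : 1 <= K) by (pose proof (pos_INR (m + 1)); lra).
  assert (HL : Rbar_locally p_infty (fun L => 1 <= L /\ 3 * K * (Rabs B + 1) / eps <= L /\
                 Rabs (L ^ (m + 1) * phi L - (- L) ^ (m + 1) * phi (- L)) <= eps / 3)).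
  { repeat apply filter_and.
    - exists 1. intros; lra.
    - exists (3 * K * (Rabs B + 1) / eps). intros; lra.
    - apply stein_boundary_vanishing. lra. }
  destruct (filter_ex _ HL) as [L [HL1 [HLB Hbdry]]].
  set (e1 := eps / (3 * K)).
  assert (He1 : 0 < e1) by (apply Rdiv_lt_0_compat; lra).
  assert (HKB : K * (Rabs B / L) <= eps / 3).
  { apply Rmult_le_reg_r with (3 * L / eps); [apply Rdiv_lt_0_compat; lra|].
    replace (eps / 3 * (3 * L / eps)) with L by (field; lra).
    replace (K * (Rabs B / L) * (3 * L / eps)) with (3 * K * Rabs B / eps) by (field; lra).
    eapply Rle_trans; [|exact HLB]. unfold Rdiv.
    apply Rmult_le_compat_r; [left; apply Rinv_0_lt_compat; lra|lra]. }
  assert (HKe : K * e1 = eps / 3) by (unfold e1; field; lra).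
  generalize (filter_and (F := F) _ _ HB (filter_and (F := F) _ _
    (Happrox (m + 2)%nat L e1 ltac:(lia) ltac:(lra) He1) (Happrox m L e1 ltac:(lia) ltac:(lra) He1))).
  apply filter_imp. intros s [Hs [Hm2 Hm0]].
  assert (Htail : forall k, (1 <= k)%nat -> Rabs (mu n s) / L ^ k <= Rabs B / L).
  { intros k Hk. eapply Rle_trans; [apply Rdiv_pow_le_Rdiv; auto using Rabs_pos|].
    unfold Rdiv. apply Rmult_le_compat_r; [left; apply Rinv_0_lt_compat; lra|].
    pose proof (Rle_abs B). lra. }
  pose proof (Htail (n - (m + 2))%nat ltac:(lia)). pose proof (Htail (n - m)%nat ltac:(lia)).
  eapply Rle_trans; [apply (stein_defect_le m L); [exact Hm2|exact Hm0]|].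
  assert (INR (m + 1) * (Rabs (mu n s) / L ^ (n - m) + e1) <= INR (m + 1) * (Rabs B / L + e1))
    by (apply Rmult_le_compat_l; [apply pos_INR|lra]).
  rewrite HK in HKB, HKe. nra.
Qed.

Section MomentsCumulants.
Context (F : (R -> Prop) -> Prop) {FF : Filter F}.
Variables (mu kappa : nat -> R -> R) (n : nat).

(* [mu] plays the moments and [kappa] the cumulants of a standardized variable. *)
Hypothesis moment_cumulant_rec : F (fun s => mu 0%nat s = 1 /\ kappa 1%nat s = 0 /\ kappa 2%nat s = 1 /\
  forall r, (r < n)%nat ->
    mu (S r) s = sum_f_R0 (fun i => Binomial.C r i * mu i s * kappa (S r - i)%nat s) r).
Hypothesis cumulants_bounded : forall m, (3 <= m <= n)%nat -> bounded_along F (kappa m).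

Lemma low_cumulants_bounded m : (1 <= m <= n)%nat -> bounded_along F (kappa m).
Proof.
  intros Hm. destruct (Compare_dec.le_lt_dec 3 m); [apply cumulants_bounded; lia|].
  assert (Hm12 : m = 1%nat \/ m = 2%nat) by lia.
  destruct Hm12 as [-> | ->].
  - apply (bounded_along_ext F (fun _ => 0)); [|apply (bounded_along_const F)].
    generalize moment_cumulant_rec. apply filter_imp. intros s (_ & H1 & _). auto.
  - apply (bounded_along_ext F (fun _ => 1)); [|apply (bounded_along_const F)].
    generalize moment_cumulant_rec. apply filter_imp. intros s (_ & _ & H2 & _). auto.
Qed.

Lemma moments_bounded i : (i <= n)%nat -> bounded_along F (mu i).
Proof.
  induction i as [i IH] using Wf_nat.lt_wf_ind. intros Hi. destruct i as [|r].
  - apply (bounded_along_ext F (fun _ => 1)); [|apply (bounded_along_const F)].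
    generalize moment_cumulant_rec. apply filter_imp. intros s (H0 & _). auto.
  - apply (bounded_along_ext F
             (fun s => sum_f_R0 (fun i => Binomial.C r i * mu i s * kappa (S r - i)%nat s) r)).
    + generalize moment_cumulant_rec. apply filter_imp. intros s (_ & _ & _ & Hrec).
      symmetry. apply Hrec. lia.
    + apply (bounded_along_sum F). intros i Hir.
      apply (bounded_along_mult F); [apply (bounded_along_mult F)|apply low_cumulants_bounded; lia].
      * apply (bounded_along_const F).
      * apply IH; lia.
Qed.

(* At order [r = q + 2] the recursion reads
   [mu (q+3) - (q+2) mu (q+1) = kappa (q+3) + sum_(1 <= i <= q) C(q+2, i) mu i kappa (q+3-i)]. *)
Lemma cumulant_vanishing_step q : (q + 3 < n)%nat -> gauss_window_approx F mu n ->
  (forall m, (3 <= m <= q + 2)%nat -> vanishing_along F (kappa m)) ->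
  vanishing_along F (kappa (q + 3)%nat).
Proof.
  intros Hq Happrox IH.
  set (T := fun i s => Binomial.C (q + 2) i * mu i s * kappa (S (q + 2) - i)%nat s).
  apply (vanishing_along_ext F (fun s => (mu (q + 1 + 2)%nat s - INR (q + 1 + 1) * mu (q + 1)%nat s)
                                 - (sum_f_R0 (fun i => T i s) q - T 0%nat s))).
  - generalize moment_cumulant_rec. apply filter_imp. intros s (H0 & H1 & H2 & Hrec).
    replace (q + 1 + 2)%nat with (S (S (S q))) by lia.
    rewrite (Hrec (S (S q))) by lia. rewrite !tech5. fold (T (S q) s) (T (S (S q)) s).
    replace (S (S q)) with (q + 2)%nat by lia.
    unfold T. rewrite C_n_0, C_n_n, H0.
    replace (S (q + 2) - 0)%nat with (q + 3)%nat by lia.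
    replace (S (q + 2) - S q)%nat with 2%nat by lia.
    replace (S (q + 2) - (q + 2))%nat with 1%nat by lia.
    replace (Binomial.C (q + 2) (S q)) with (INR (q + 1 + 1))
      by (replace (q + 2)%nat with (S (S q)) by lia; rewrite binomial_C_S_diag; f_equal; lia).
    rewrite H1, H2. replace (S q) with (q + 1)%nat by lia. replace (S (S q)) with (q + 1 + 1)%nat by lia.
    ring.
  - apply (vanishing_along_plus F);
      [|apply (vanishing_along_ext F (fun s => -1 * (sum_f_R0 (fun i => T i s) q - T 0%nat s)))].
    + apply (stein_moments_vanishing F mu n); [lia|apply moments_bounded; lia|exact Happrox].
    + apply filter_forall. intros; ring.
    + apply (vanishing_along_mult F); [apply (bounded_along_const F)|].
      apply (vanishing_along_sum_tail F). intros i Hi. unfold T.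
      apply (vanishing_along_mult F (fun s => Binomial.C (q + 2) i * mu i s)).
      * apply (bounded_along_mult F); [apply (bounded_along_const F)|apply moments_bounded; lia].
      * apply IH. lia.
Qed.

Lemma cumulants_vanishing j : gauss_window_approx F mu n -> (3 <= j < n)%nat ->
  vanishing_along F (kappa j).
Proof.
  intros Happrox Hj. replace j with ((j - 3) + 3)%nat by lia.
  assert (Hall : forall q, (q + 3 < n)%nat ->
                 forall m, (3 <= m <= q + 3)%nat -> vanishing_along F (kappa m)).
  { induction q as [|q IHq]; intros Hq m Hm.
    - replace m with (0 + 3)%nat by lia. apply cumulant_vanishing_step; auto. intros; lia.
    - destruct (Nat.eq_dec m (S q + 3)) as [->|]; [|apply IHq; lia].
      apply cumulant_vanishing_step; auto. intros m' Hm'. apply IHq; lia. }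
  apply (Hall (j - 3)%nat); lia.
Qed.

End MomentsCumulants.

(** * Derivatives of a logarithm *)

Lemma is_derive_sum_f_R0 (f : nat -> R -> R) (df : nat -> R) N s :
  (forall i, (i <= N)%nat -> is_derive (f i) s (df i)) ->
  is_derive (fun u => sum_f_R0 (fun i => f i u) N) s (sum_f_R0 df N).
Proof.
  induction N as [|N IH]; intros H; simpl; [apply H; lia|].
  apply (is_derive_plus (K := R_AbsRing) (V := R_NormedModule)); [apply IH; intros i Hi|]; apply H; lia.
Qed.

Lemma ex_derive_sum_f_R0 (f : nat -> R -> R) N s :
  (forall i, (i <= N)%nat -> ex_derive (f i) s) ->
  ex_derive (fun u => sum_f_R0 (fun i => f i u) N) s.
Proof.
  intros H. exists (sum_f_R0 (fun i => Derive (f i) s) N).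
  apply is_derive_sum_f_R0. intros i Hi. apply Derive_correct, H, Hi.
Qed.

Lemma sum_pascal (A : nat -> R) r :
  sum_f_R0 (fun i => Binomial.C r i * (A (S i) + A i)) r =
  sum_f_R0 (fun i => Binomial.C (S r) i * A i) (S r).
Proof.
  destruct r as [|r]; [simpl; rewrite !C_n_0, C_n_n; ring|].
  rewrite (sum_eq _ (fun i => Binomial.C (S r) i * A (S i) + Binomial.C (S r) i * A i))
    by (intros; ring).
  rewrite plus_sum, (tech5 (fun i => Binomial.C (S r) i * A (S i))).
  rewrite (decomp_sum (fun i => Binomial.C (S r) i * A i)) by lia.
  rewrite (decomp_sum (fun i => Binomial.C (S (S r)) i * A i)) by lia.
  simpl Init.Nat.pred. rewrite (tech5 (fun i => Binomial.C (S (S r)) (S i) * A (S i))).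
  rewrite !C_n_0, !C_n_n.
  rewrite (sum_eq (fun i => Binomial.C (S (S r)) (S i) * A (S i))
                  (fun i => Binomial.C (S r) i * A (S i) + Binomial.C (S r) (S i) * A (S i)) r)
    by (intros i Hi; rewrite <- pascal by lia; ring).
  rewrite plus_sum. ring.
Qed.

(* Leibniz' rule applied to [f 0' = f 0 * (ln (f 0))'] gives the moment-cumulant recursion. *)
Section LogDerivatives.
Variables (D : R -> Prop) (f : nat -> R -> R).
Hypothesis D_open : forall s, D s -> locally s D.
Hypothesis f_derive : forall r s, D s -> is_derive (f r) s (f (S r) s).
Hypothesis f0_pos : forall s, D s -> 0 < f 0%nat s.

Local Notation cum m := (Derive_n (fun u => ln (f 0%nat u)) m).

Lemma is_derive_ln_f0 s : D s -> is_derive (cum 0) s (f 1%nat s / f 0%nat s).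
Proof.
  intros Hs. unfold Rdiv.
  apply (is_derive_comp (K := R_AbsRing) (V := R_NormedModule) ln (f 0%nat)).
  - apply is_derive_ln, f0_pos, Hs.
  - apply f_derive, Hs.
Qed.

Lemma Derive_ln_f0 s : D s -> cum 1 s = f 1%nat s / f 0%nat s.
Proof. intros Hs. apply is_derive_unique, is_derive_ln_f0, Hs. Qed.

Definition tower_rec (r : nat) (s : R) : Prop :=
  f (S r) s = sum_f_R0 (fun i => Binomial.C r i * f i s * cum (S r - i) s) r.

Lemma tower_base s : D s -> (forall m, (m <= 1)%nat -> ex_derive (cum m) s) /\ tower_rec 0 s.
Proof.
  intros Hs. split.
  - intros m Hm. destruct m as [|[|]]; [|..|lia].
    + eexists. apply is_derive_ln_f0, Hs.
    + apply (ex_derive_ext_loc (fun u => f 1%nat u / f 0%nat u)).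
      { generalize (D_open s Hs). apply filter_imp. intros u Hu. symmetry. apply Derive_ln_f0, Hu. }
      apply ex_derive_div; [eexists; apply f_derive, Hs|eexists; apply f_derive, Hs|].
      apply Rgt_not_eq, f0_pos, Hs.
  - unfold tower_rec. cbn [sum_f_R0]. rewrite Nat.sub_0_r, C_n_0, Derive_ln_f0 by exact Hs. field.
    apply Rgt_not_eq, f0_pos, Hs.
Qed.

Lemma tower_rec_step r :
  (forall s, D s -> (forall m, (m <= S r)%nat -> ex_derive (cum m) s) /\ tower_rec r s) ->
  forall s, D s -> tower_rec (S r) s.
Proof.
  intros IH s Hs. unfold tower_rec.
  rewrite <- (is_derive_unique _ _ _ (f_derive (S r) s Hs)).
  rewrite (Derive_ext_loc _ (fun u => sum_f_R0 (fun i => Binomial.C r i * f i u * cum (S r - i) u) r)).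
  2: { generalize (D_open s Hs). apply filter_imp. intros u Hu. apply IH, Hu. }
  set (A := fun i => f i s * cum (S (S r) - i) s).
  erewrite is_derive_unique.
  2: { apply is_derive_sum_f_R0 with (df := fun i => Binomial.C r i * (A (S i) + A i)).
       intros i Hi. unfold A. replace (S (S r) - S i)%nat with (S r - i)%nat by lia.
       replace (S (S r) - i)%nat with (S (S r - i)) by lia.
       apply (is_derive_ext (K := R_AbsRing) (V := R_NormedModule)
                (fun u => Binomial.C r i * (f i u * cum (S r - i) u)));
         [intros; symmetry; apply Rmult_assoc|].
       apply is_derive_scal.
       apply (is_derive_mult (K := R_AbsRing)); [apply f_derive, Hs| |intros; apply Rmult_comm].
       apply Derive_correct. apply IH; [exact Hs|lia]. }
  rewrite sum_pascal. apply sum_eq. intros i _. unfold A. ring.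
Qed.

Lemma tower_derive_step r : (forall s, D s -> tower_rec (S r) s) ->
  (forall s, D s -> forall m, (m <= S r)%nat -> ex_derive (cum m) s) ->
  forall s, D s -> ex_derive (cum (S (S r))) s.
Proof.
  intros Hrec Hder s Hs.
  apply (ex_derive_ext_loc (fun u => (f (S (S r)) u
            - sum_f_R0 (fun i => Binomial.C (S r) (S i) * f (S i) u * cum (S (S r) - S i) u) r)
            / f 0%nat u)).
  { generalize (D_open s Hs). apply filter_imp. intros u Hu.
    pose proof (f0_pos u Hu). pose proof (Hrec u Hu) as Hr. unfold tower_rec in Hr.
    rewrite decomp_sum in Hr by lia. simpl Init.Nat.pred in Hr. rewrite C_n_0, Nat.sub_0_r in Hr.
    assert (E : (f (S (S r)) u
                 - sum_f_R0 (fun i => Binomial.C (S r) (S i) * f (S i) u * cum (S (S r) - S i) u) r)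
                / f 0%nat u = cum (S (S r)) u) by (rewrite Hr; field; lra).
    exact E. }
  apply ex_derive_div; [|eexists; apply f_derive, Hs|apply Rgt_not_eq, f0_pos, Hs].
  apply (ex_derive_minus (K := R_AbsRing) (V := R_NormedModule)); [eexists; apply f_derive, Hs|].
  apply ex_derive_sum_f_R0. intros i Hi. apply ex_derive_mult.
  - apply ex_derive_scal. eexists. apply f_derive, Hs.
  - apply Hder; [exact Hs|lia].
Qed.

Lemma log_derivatives_tower r : forall s, D s ->
  (forall m, (m <= S r)%nat -> ex_derive (cum m) s) /\ tower_rec r s.
Proof.
  induction r as [|r IH]; [exact tower_base|].
  assert (Hrec : forall s, D s -> tower_rec (S r) s) by (apply tower_rec_step, IH).
  intros s Hs. split; [|apply Hrec, Hs].
  intros m Hm. destruct (Nat.eq_dec m (S (S r))) as [->|].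
  - apply tower_derive_step; auto. intros u Hu. apply IH, Hu.
  - apply IH; [exact Hs|lia].
Qed.

End LogDerivatives.

(** * Tilted power series *)

Lemma Series_ge_term (u : nat -> R) k : (forall k, 0 <= u k) -> ex_series u -> u k <= Series u.
Proof.
  intros Hu Hs. rewrite (Series_incr_n u (S k)) by (lia || auto). simpl Init.Nat.pred.
  assert (u k <= sum_f_R0 u k).
  { destruct k as [|k]; [simpl; lra|]. rewrite tech5.
    pose proof (cond_pos_sum u k Hu). lra. }
  assert (0 <= Series (fun i => u (S k + i)%nat)).
  { replace 0 with (Series (fun i => 0 * u (S k + i)%nat)) by (rewrite Series_scal_l; ring).
    apply Series_le; [intros i; rewrite Rmult_0_l; split; [lra|apply Hu]|].
    apply (ex_series_incr_n u (S k)), Hs. }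
  lra.
Qed.

Definition centered_coef (a : nat -> R) (c : R) (r : nat) : nat -> R := fun k => (INR k - c) ^ r * a k.

Definition inside_radius (a : nat -> R) (s : R) : Prop := Rbar_lt (Rabs (exp s)) (CV_radius a).

(* [tilted_moment a c r s = sum_k (k - c)^r a_k e^((k - c) s)], the [r]-th derivative of
   [s |-> e^(-c s) f(e^s)]. *)
Definition tilted_moment (a : nat -> R) (c : R) (r : nat) (s : R) : R :=
  PSeries (centered_coef a c r) (exp s) * exp (- (c * s)).

Lemma centered_coef_S a c r :
  forall k, centered_coef a c (S r) k
            = PS_plus (PS_incr_1 (PS_derive (centered_coef a c r))) (PS_scal (- c) (centered_coef a c r)) k.
Proof.
  intros k. unfold PS_plus, PS_scal, PS_incr_1, PS_derive, centered_coef.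
  change plus with Rplus. change scal with Rmult.
  destruct k; simpl; [change zero with 0|]; ring.
Qed.

Lemma CV_radius_centered_coef a c r : Rbar_le (CV_radius a) (CV_radius (centered_coef a c r)).
Proof.
  induction r as [|r IH].
  - rewrite (CV_radius_ext (centered_coef a c 0) a); [apply Rbar_le_refl|].
    intros k. unfold centered_coef. simpl. ring.
  - rewrite (CV_radius_ext _ _ (centered_coef_S a c r)).
    eapply Rbar_le_trans; [|apply CV_radius_plus].
    apply (Rbar_min_case_strong _ _ (fun m => Rbar_le (CV_radius a) m)); intros _.
    + rewrite CV_radius_incr_1, CV_radius_derive. exact IH.
    + destruct (Req_dec c 0) as [->|Hc]; [|rewrite CV_radius_scal by lra; exact IH].
      rewrite (CV_radius_ext (PS_scal (- 0) (centered_coef a 0 r)) (fun _ => 0)).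
      * rewrite CV_radius_const_0. destruct (CV_radius a); simpl; auto.
      * intros k. unfold PS_scal. change scal with Rmult. ring.
Qed.

Lemma inside_radius_centered_coef a c r s :
  inside_radius a s -> Rbar_lt (Rabs (exp s)) (CV_radius (centered_coef a c r)).
Proof. intros H. eapply Rbar_lt_le_trans; [exact H|apply CV_radius_centered_coef]. Qed.

Lemma ex_series_centered_coef a c r s :
  inside_radius a s -> ex_series (fun k => centered_coef a c r k * exp s ^ k).
Proof. intros H. apply ex_series_Rabs, CV_disk_inside, inside_radius_centered_coef, H. Qed.

Lemma inside_radius_open a s : inside_radius a s -> locally s (inside_radius a).
Proof.
  unfold inside_radius. rewrite Rabs_pos_eq by (left; apply exp_pos).
  destruct (CV_radius a) as [r| |]; simpl; intros H; [|apply filter_forall; auto|contradiction].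
  pose proof (continuous_exp s _ (open_lt r (exp s) H)) as Hc. unfold filtermap in Hc.
  generalize Hc. apply filter_imp.
  intros u Hu. rewrite Rabs_pos_eq by (left; apply exp_pos). exact Hu.
Qed.

Lemma is_derive_tilted_moment a c r s : inside_radius a s ->
  is_derive (tilted_moment a c r) s (tilted_moment a c (S r) s).
Proof.
  intros Hs. pose proof (inside_radius_centered_coef a c r s Hs) as Hr.
  assert (HU : is_derive (fun u => PSeries (centered_coef a c r) (exp u)) s
                 (PSeries (centered_coef a c (S r)) (exp s) + c * PSeries (centered_coef a c r) (exp s))).
  { replace (PSeries (centered_coef a c (S r)) (exp s) + c * PSeries (centered_coef a c r) (exp s))
      with (exp s * PSeries (PS_derive (centered_coef a c r)) (exp s)).
    - apply (is_derive_comp (K := R_AbsRing) (V := R_NormedModule) (PSeries _) exp).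
      + apply is_derive_PSeries, Hr.
      + apply is_derive_exp.
    - rewrite <- PSeries_incr_1, <- PSeries_scal, <- PSeries_plus.
      + apply PSeries_ext. intros k. unfold PS_plus, PS_scal, PS_incr_1, PS_derive, centered_coef.
        change plus with Rplus. change scal with Rmult.
        destruct k; simpl; [change zero with 0|]; ring.
      + apply CV_radius_inside, inside_radius_centered_coef, Hs.
      + apply ex_pseries_scal; [intros; apply Rmult_comm|]. apply CV_radius_inside, Hr. }
  assert (He : is_derive (fun u => exp (- (c * u))) s (- c * exp (- (c * s)))).
  { auto_derive; auto. ring. }
  unfold tilted_moment.
  replace (PSeries (centered_coef a c (S r)) (exp s) * exp (- (c * s))) with
    ((PSeries (centered_coef a c (S r)) (exp s) + c * PSeries (centered_coef a c r) (exp s))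
       * exp (- (c * s)) + PSeries (centered_coef a c r) (exp s) * (- c * exp (- (c * s)))) by ring.
  apply (is_derive_mult (K := R_AbsRing) (fun u => PSeries (centered_coef a c r) (exp u))
                        (fun u => exp (- (c * u)))); [exact HU|exact He|intros; apply Rmult_comm].
Qed.

Lemma tilted_moment_series a c r s :
  tilted_moment a c r s = Series (fun k => (INR k - c) ^ r * (a k * exp s ^ k)) * exp (- (c * s)).
Proof. unfold tilted_moment, PSeries, centered_coef. f_equal. apply Series_ext. intros; ring. Qed.

Lemma tilted_moment_0_pos a c s : (forall k, 0 <= a k) -> 0 < a 0%nat -> inside_radius a s ->
  0 < tilted_moment a c 0 s.
Proof.
  intros Ha Ha0 Hs. unfold tilted_moment. apply Rmult_lt_0_compat; [|apply exp_pos].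
  unfold PSeries. eapply Rlt_le_trans; [|apply (Series_ge_term _ 0%nat)].
  - unfold centered_coef. simpl. lra.
  - intros k. unfold centered_coef. simpl. rewrite Rmult_1_l.
    apply Rmult_le_pos; auto. apply pow_le. left; apply exp_pos.
  - apply ex_series_centered_coef, Hs.
Qed.

Definition tilted_cumulant (a : nat -> R) (c : R) (m : nat) : R -> R :=
  Derive_n (fun u => ln (tilted_moment a c 0 u)) m.

Section Tilted.
Variable a : nat -> R.
Hypothesis a_nonneg : forall k, 0 <= a k.
Hypothesis a0_pos : 0 < a 0%nat.

Lemma tilted_tower c r s : inside_radius a s ->
  (forall m, (m <= S r)%nat -> ex_derive (tilted_cumulant a c m) s) /\ tower_rec (tilted_moment a c) r s.
Proof.
  apply log_derivatives_tower.
  - apply inside_radius_open.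
  - intros; apply is_derive_tilted_moment; auto.
  - intros; apply tilted_moment_0_pos; auto.
Qed.

Lemma tilted_moment_0 c u : tilted_moment a c 0 u = pf a (exp u) * exp (- (c * u)).
Proof.
  unfold tilted_moment, pf. f_equal. apply PSeries_ext. intros k. unfold centered_coef. simpl. ring.
Qed.

Lemma tilted_cumulant_0_fulcrum m s : tilted_cumulant a 0 m s = Derive_n (fulcrum a) m s.
Proof.
  apply Derive_n_ext. intros u. unfold fulcrum. rewrite tilted_moment_0.
  rewrite Rmult_0_l, Ropp_0, exp_0, Rmult_1_r. reflexivity.
Qed.

Lemma ln_tilted_moment_0 c u : inside_radius a u ->
  ln (tilted_moment a c 0 u) = fulcrum a u - c * u.
Proof.
  intros Hu. pose proof (tilted_moment_0_pos a 0 u a_nonneg a0_pos Hu) as Hpos.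
  rewrite tilted_moment_0, Rmult_0_l, Ropp_0, exp_0, Rmult_1_r in Hpos.
  rewrite tilted_moment_0, ln_mult, ln_exp by (auto; apply exp_pos). unfold fulcrum. ring.
Qed.

Lemma tilted_cumulant_1 c s : inside_radius a s ->
  tilted_cumulant a c 1 s = Derive_n (fulcrum a) 1 s - c.
Proof.
  intros Hs. unfold tilted_cumulant. simpl.
  rewrite (Derive_ext_loc _ (fun v => fulcrum a v - c * v)).
  2: { generalize (inside_radius_open a s Hs). apply filter_imp. intros u Hu.
       apply ln_tilted_moment_0, Hu. }
  apply is_derive_unique. apply (is_derive_minus (K := R_AbsRing) (V := R_NormedModule)).
  - apply Derive_correct.
    destruct (tilted_tower 0 0 s Hs) as [Hder _]. specialize (Hder 0%nat ltac:(lia)).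
    eapply ex_derive_ext; [|exact Hder]. intros u. apply (tilted_cumulant_0_fulcrum 0).
  - replace c with (c * 1) at 2 by ring. apply is_derive_scal, (is_derive_id (K := R_AbsRing)).
Qed.

Lemma tilted_cumulant_ge_2 c m s : inside_radius a s -> (2 <= m)%nat ->
  tilted_cumulant a c m s = Derive_n (fulcrum a) m s.
Proof.
  intros Hs Hm. rewrite <- tilted_cumulant_0_fulcrum.
  assert (H2 : forall u, inside_radius a u -> tilted_cumulant a c 2 u = tilted_cumulant a 0 2 u).
  { intros u Hu. change (Derive (tilted_cumulant a c 1) u = Derive (tilted_cumulant a 0 1) u).
    rewrite (Derive_ext_loc (tilted_cumulant a c 1) (fun v => tilted_cumulant a 0 1 v - c)).
    2: { generalize (inside_radius_open a u Hu). apply filter_imp. intros v Hv.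
         rewrite !tilted_cumulant_1, Rminus_0_r by exact Hv. reflexivity. }
    apply is_derive_unique.
    replace (Derive (tilted_cumulant a 0 1) u) with (Derive (tilted_cumulant a 0 1) u - 0) by ring.
    apply (is_derive_minus (K := R_AbsRing) (V := R_NormedModule)).
    - apply Derive_correct, (tilted_tower 0 0 u Hu). lia.
    - apply (is_derive_const (K := R_AbsRing) (V := R_NormedModule)). }
  replace m with ((m - 2) + 2)%nat by lia. unfold tilted_cumulant. rewrite <- !Derive_n_comp.
  apply Derive_n_ext_loc. generalize (inside_radius_open a s Hs). apply filter_imp.
  intros u Hu. apply H2, Hu.
Qed.

Lemma tilted_moment_ratio c r s : tilted_moment a c r s / tilted_moment a c 0 s =
  Series (fun k => (INR k - c) ^ r * (a k * exp s ^ k)) / Series (fun k => a k * exp s ^ k).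
Proof.
  rewrite !tilted_moment_series. pose proof (exp_pos (- (c * s))).
  rewrite (Series_ext (fun k => (INR k - c) ^ 0 * (a k * exp s ^ k)) (fun k => a k * exp s ^ k))
    by (intros; simpl; ring).
  destruct (Req_dec (Series (fun k => a k * exp s ^ k)) 0) as [E|E].
  - rewrite E, Rmult_0_l. unfold Rdiv. rewrite Rinv_0. ring.
  - field. split; lra.
Qed.

Lemma mean_f_exp s : inside_radius a s -> mean_f a (exp s) = Derive_n (fulcrum a) 1 s.
Proof.
  intros Hs. destruct (tilted_tower 0 0 s Hs) as [_ Hrec].
  pose proof (tilted_moment_0_pos a 0 s a_nonneg a0_pos Hs).
  unfold tower_rec in Hrec. cbn [sum_f_R0] in Hrec. rewrite C_n_0, Nat.sub_0_r in Hrec.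
  change (Derive_n (fun u => ln (tilted_moment a 0 0 u))) with (tilted_cumulant a 0) in Hrec.
  rewrite <- (tilted_cumulant_0_fulcrum 1).
  replace (tilted_cumulant a 0 1 s) with (tilted_moment a 0 1 s / tilted_moment a 0 0 s)
    by (rewrite Hrec; field; lra).
  rewrite tilted_moment_ratio. unfold mean_f, pf, PSeries. f_equal; apply Series_ext; intros; ring.
Qed.

Lemma var_f_exp s : inside_radius a s -> var_f a (exp s) = Derive_n (fulcrum a) 2 s.
Proof.
  intros Hs. set (c := mean_f a (exp s)).
  destruct (tilted_tower c 1 s Hs) as [_ Hrec].
  pose proof (tilted_moment_0_pos a c s a_nonneg a0_pos Hs).
  unfold tower_rec in Hrec. cbn [sum_f_R0] in Hrec. rewrite C_n_0, C_n_n in Hrec.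
  change (Derive_n (fun u => ln (tilted_moment a c 0 u))) with (tilted_cumulant a c) in Hrec.
  rewrite tilted_cumulant_1, <- mean_f_exp in Hrec by exact Hs. fold c in Hrec.
  rewrite <- (tilted_cumulant_ge_2 c 2) by (auto; lia).
  replace (tilted_cumulant a c 2 s) with (tilted_moment a c 2 s / tilted_moment a c 0 s)
    by (rewrite Hrec; rewrite Nat.sub_0_r; simpl (2 - 1)%nat; field; lra).
  rewrite tilted_moment_ratio. unfold var_f, pf, PSeries. fold c. reflexivity.
Qed.

End Tilted.

(** * The standardized variable *)

Lemma ex_series_ext_R (u v : nat -> R) : (forall k, u k = v k) -> ex_series u -> ex_series v.
Proof. apply (ex_series_ext (V := R_NormedModule)). Qed.

Section Standardized.
Variable a : nat -> R.
Hypothesis a_K : in_class_K a.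

Definition weights_at (s : R) : nat -> R := fun k => a k * exp s ^ k.

Lemma weights_at_weights s : inside_radius a s -> weights (weights_at s).
Proof.
  destruct a_K as [Ha [Ha0 _]]. intros Hs. split; [|split].
  - intros k. apply Rmult_le_pos; auto. apply pow_le. left; apply exp_pos.
  - eapply ex_series_ext_R; [|apply (ex_series_centered_coef a 0 0 s Hs)].
    intros k. unfold centered_coef, weights_at. simpl. ring.
  - pose proof (tilted_moment_0_pos a 0 s Ha Ha0 Hs) as H.
    rewrite tilted_moment_series, Rmult_0_l, Ropp_0, exp_0, Rmult_1_r in H.
    unfold weights_at. erewrite Series_ext; [exact H|]. intros; simpl; ring.
Qed.

Lemma var_f_pos s : inside_radius a s -> 0 < var_f a (exp s).
Proof.
  intros Hs. destruct (weights_at_weights s Hs) as [Hw [_ HW]].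
  destruct a_K as [Ha [Ha0 [[n0 [Hn0 Hn0']] _]]]. set (c := mean_f a (exp s)).
  assert (Hw2 : ex_series (fun k => (INR k - c) ^ 2 * weights_at s k)).
  { eapply ex_series_ext_R; [|apply (ex_series_centered_coef a c 2 s Hs)].
    intros k. unfold centered_coef, weights_at. ring. }
  assert (Hnn : forall k, 0 <= (INR k - c) ^ 2 * weights_at s k)
    by (intros; apply Rmult_le_pos; auto; apply pow2_ge_0).
  unfold var_f, pf, PSeries. fold c. apply Rdiv_lt_0_compat; [|exact HW].
  destruct (Req_dec c 0) as [Hc|Hc].
  - eapply Rlt_le_trans; [|apply (Series_ge_term _ n0 Hnn Hw2)].
    apply Rmult_lt_0_compat; [rewrite Hc, Rminus_0_r; apply pow_lt, lt_0_INR; lia|].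
    apply Rmult_lt_0_compat; [destruct (Ha n0); [auto|congruence]|apply pow_lt, exp_pos].
  - eapply Rlt_le_trans; [|apply (Series_ge_term _ 0%nat Hnn Hw2)].
    apply Rmult_lt_0_compat; [simpl; nra|unfold weights_at; simpl; lra].
Qed.

Definition standardized (s : R) : nat -> R := fun k => (INR k - mean_f a (exp s)) / sd_f a (exp s).
Definition std_moment (r : nat) (s : R) : R := wmoment (weights_at s) (standardized s) r.
Definition std_cumulant (m : nat) (s : R) : R :=
  tilted_cumulant a (mean_f a (exp s)) m s / sd_f a (exp s) ^ m.

Lemma sd_f_pos s : inside_radius a s -> 0 < sd_f a (exp s).
Proof. intros Hs. apply sqrt_lt_R0, var_f_pos, Hs. Qed.

Lemma sd_f_sqr s : inside_radius a s -> sd_f a (exp s) ^ 2 = Derive_n (fulcrum a) 2 s.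
Proof.
  intros Hs. pose proof (var_f_pos s Hs). destruct a_K as [Ha [Ha0 _]].
  unfold sd_f. simpl. rewrite Rmult_1_r, sqrt_sqrt by lra. apply var_f_exp; auto.
Qed.

Lemma ex_series_standardized_pow n s : inside_radius a s ->
  ex_series (fun k => standardized s k ^ n * weights_at s k).
Proof.
  intros Hs. eapply ex_series_ext_R.
  2: { apply (ex_series_scal_l (V := R_NormedModule) (/ sd_f a (exp s) ^ n)).
       apply (ex_series_centered_coef a (mean_f a (exp s)) n s Hs). }
  intros k. unfold centered_coef, weights_at, standardized. change scal with Rmult. unfold Rdiv.
  rewrite Rpow_mult_distr, pow_inv. ring.
Qed.

Lemma std_moment_tilted r s : inside_radius a s ->
  std_moment r s = tilted_moment a (mean_f a (exp s)) r s / tilted_moment a (mean_f a (exp s)) 0 s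
                   / sd_f a (exp s) ^ r.
Proof.
  intros Hs. pose proof (sd_f_pos s Hs). pose proof (pow_lt _ r H).
  pose proof (weights_at_weights s Hs) as [_ [_ HW]].
  rewrite tilted_moment_ratio. unfold std_moment, wmoment, weights_at, standardized in *.
  rewrite (Series_ext _
    (fun k => ((INR k - mean_f a (exp s)) ^ r * (a k * exp s ^ k)) * / sd_f a (exp s) ^ r)).
  - rewrite Series_scal_r. field. lra.
  - intros k. unfold Rdiv. rewrite Rpow_mult_distr, pow_inv. ring.
Qed.

Lemma std_moment_cumulant_rec s : inside_radius a s ->
  std_moment 0 s = 1 /\ std_cumulant 1 s = 0 /\ std_cumulant 2 s = 1 /\
  forall r, std_moment (S r) s
            = sum_f_R0 (fun i => Binomial.C r i * std_moment i s * std_cumulant (S r - i) s) r.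
Proof.
  intros Hs. pose proof (sd_f_pos s Hs) as Hsd. destruct a_K as [Ha [Ha0 _]].
  set (c := mean_f a (exp s)). set (sg := sd_f a (exp s)) in *.
  pose proof (tilted_moment_0_pos a c s Ha Ha0 Hs) as HT0.
  split; [|split; [|split]].
  - rewrite std_moment_tilted by exact Hs. fold c sg. simpl. field. lra.
  - unfold std_cumulant. fold c. rewrite tilted_cumulant_1, <- mean_f_exp by auto. unfold c, Rdiv. ring.
  - unfold std_cumulant. fold c sg. rewrite tilted_cumulant_ge_2, <- sd_f_sqr by (auto; lia).
    fold sg. field. lra.
  - intros r. rewrite !std_moment_tilted by exact Hs. fold c sg.
    destruct (tilted_tower a Ha Ha0 c r s Hs) as [_ Hrec]. rewrite Hrec.
    unfold Rdiv. rewrite Rmult_assoc, Rmult_comm, scal_sum.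
    apply sum_eq. intros i Hi. rewrite std_moment_tilted by exact Hs.
    unfold std_cumulant, tilted_cumulant. fold c sg.
    replace (sg ^ S r) with (sg ^ i * sg ^ (S r - i)) by (rewrite <- pow_add; f_equal; lia).
    assert (0 < sg ^ i) by (apply pow_lt; lra). assert (0 < sg ^ (S r - i)) by (apply pow_lt; lra).
    field. repeat split; lra.
Qed.

Lemma std_cumulant_norm_deriv m s : inside_radius a s -> (2 <= m)%nat ->
  std_cumulant m s = norm_deriv a m s.
Proof.
  intros Hs Hm. pose proof (sd_f_pos s Hs) as Hsd. destruct a_K as [Ha [Ha0 _]].
  unfold std_cumulant, norm_deriv. rewrite tilted_cumulant_ge_2 by auto. f_equal.
  rewrite <- sd_f_sqr by auto.
  rewrite <- (Rpower_pow 2 (sd_f a (exp s))), Rpower_mult, <- (Rpower_pow m (sd_f a (exp s))) by auto.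
  f_equal. simpl. field.
Qed.

Lemma wcdf_standardized x s : wcdf (weights_at s) (standardized s) x = cdf_breve a (exp s) x.
Proof.
  unfold cdf_breve, wcdf, weights_at, standardized, ind_le, pf, PSeries. f_equal.
  apply Series_ext. intros k. destruct (Rle_dec _ x); ring.
Qed.

End Standardized.

Lemma left_to_filter (L : Rbar) : Filter (left_to L).
Proof.
  destruct L; simpl; [apply at_left_proper_filter|apply Rbar_locally_filter|apply Rbar_locally_filter].
Qed.

Lemma eventually_inside_radius a : in_class_K a -> left_to (Rbar_ln (CV_radius a)) (inside_radius a).
Proof.
  intros (_ & _ & _ & Hr). unfold inside_radius.
  destruct (CV_radius a) as [r| |]; simpl in *; [|exists 0; intros; exact I|contradiction].
  unfold at_left, within. apply filter_forall. intros u Hu. rewrite Rabs_pos_eq by (left; apply exp_pos).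
  rewrite <- (exp_ln r) by exact Hr. apply exp_increasing, Hu.
Qed.

Lemma filterlim_exp_left_to a : in_class_K a ->
  filterlim exp (left_to (Rbar_ln (CV_radius a))) (left_to (CV_radius a)).
Proof.
  intros (_ & _ & _ & Hr).
  destruct (CV_radius a) as [r| |]; simpl in *; [|apply is_lim_exp_p|contradiction].
  assert (Hc : filterlim exp (locally (ln r)) (locally r)).
  { rewrite <- (exp_ln r) at 2 by exact Hr. apply continuous_exp. }
  intros P HP. unfold filtermap, at_left, within in *.
  specialize (Hc _ HP). unfold filtermap in Hc.
  generalize Hc. apply filter_imp. intros u Hu Hlt. apply Hu.
  rewrite <- (exp_ln r) by exact Hr. apply exp_increasing, Hlt.
Qed.

Theorem theorem3p3 (a : nat -> R) (n : nat) :
  in_class_K a ->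
  gaussian a ->
  (exists k : nat, n = (2 * k)%nat) -> (4 <= n)%nat ->
  (forall j : nat, (3 <= j <= n)%nat ->
     exists M : R,
       left_to (Rbar_ln (CV_radius a)) (fun s => Rabs (norm_deriv a j s) <= M)) ->
  forall j : nat, (3 <= j < n)%nat ->
    filterlim (norm_deriv a j) (left_to (Rbar_ln (CV_radius a))) (locally 0).
Proof.
  intros HK Hg Hev Hn4 Hb j Hj.
  set (Fl := left_to (Rbar_ln (CV_radius a))).
  assert (FF : Filter Fl) by apply left_to_filter.
  pose proof (eventually_inside_radius a HK) as HD. fold Fl in HD.
  apply (filterlim_ext_loc (std_cumulant a j)).
  { generalize HD. apply filter_imp. intros s Hs. apply std_cumulant_norm_deriv; auto; lia. }
  apply (vanishing_along_filterlim Fl).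
  apply (@cumulants_vanishing Fl FF (std_moment a) (std_cumulant a) n); [| |clear j Hj|exact Hj].
  - generalize HD. apply filter_imp. intros s Hs.
    destruct (std_moment_cumulant_rec a HK s Hs) as (? & ? & ? & ?). auto.
  - intros m Hm. destruct (Hb m Hm) as [M HM]. exists M.
    generalize (filter_and _ _ HD HM). apply filter_imp. intros s [Hs HMs].
    rewrite std_cumulant_norm_deriv by (auto; lia). exact HMs.
  - intros j L eps Hj HL Heps.
    apply (@wmoment_gauss_window Fl FF (weights_at a) (standardized a)); auto.
    + generalize HD. apply filter_imp. intros s Hs.
      split; [apply weights_at_weights|apply ex_series_standardized_pow]; auto.
    + intros x. apply (filterlim_ext (fun s => cdf_breve a (exp s) x)).
      { intros s. symmetry. apply wcdf_standardized. }
      apply (filterlim_comp _ _ _ exp (fun t => cdf_breve a t x) Fl (left_to (CV_radius a))).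
      * apply filterlim_exp_left_to, HK.
      * apply Hg.
Qed.
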